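(* Let $A\in\mathbb{R}^{m\times n}$ be semimonotone ($A^{\dagger}\geq 0$) and let $A=U_1-V_1=U_2-V_2$ be two convergent proper nonnegative splittings of different types (one of type I and the other of type II). If $U_1^{\dagger}>U_2^{\dagger}$, then there exists $\alpha$ with $0<\alpha<1$ such that $U_2^{\dagger}\leq\alpha U_1^{\dagger}$, and $\rho(U_1^{\dagger}V_1)<\rho(U_2^{\dagger}V_2)<1$.
   Context: $A^{\dagger}$ denotes the Moore–Penrose inverse and $\rho(\cdot)$ the spectral radius. Inequalities are entrywise; $X>Y$ means every entry of $X-Y$ is positive. A splitting $A=U-V$ is proper if $R(U)=R(A)$ and $N(U)=N(A)$; it is convergent if $\rho(U^{\dagger}V)<1$. A proper splitting is a proper nonnegative splitting of type I if $U^{\dagger}V\geq 0$, and of type II if $VU^{\dagger}\geq 0$. *)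

From HB Require Import structures.
From mathcomp Require Import all_boot all_order all_algebra.
From mathcomp Require Import closed_field complex.
Set Implicit Arguments. Unset Strict Implicit. Unset Printing Implicit Defensive.
Import Order.TTheory GRing.Theory Num.Theory.
Local Open Scope ring_scope.

(* Real matrices are taken over an arbitrary real closed field R (e.g. the reals). *)

Definition is_MP_inverse (R : rcfType) (m n : nat)
    (A : 'M[R]_(m, n)) (X : 'M[R]_(n, m)) : Prop :=
  [/\ A *m X *m A = A, X *m A *m X = X,
      (A *m X)^T = A *m X & (X *m A)^T = X *m A].

Definition mx_le (R : rcfType) (m n : nat) (X Y : 'M[R]_(m, n)) : Prop :=
  forall i j, X i j <= Y i j.
Definition mx_lt (R : rcfType) (m n : nat) (X Y : 'M[R]_(m, n)) : Prop :=
  forall i j, X i j < Y i j.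

Definition in_range (R : rcfType) (m n : nat) (A : 'M[R]_(m, n)) (y : 'cV[R]_m) : Prop :=
  exists x : 'cV[R]_n, y = A *m x.
Definition in_null (R : rcfType) (m n : nat) (A : 'M[R]_(m, n)) (x : 'cV[R]_n) : Prop :=
  A *m x = 0.

Definition proper_splitting (R : rcfType) (m n : nat) (A U V : 'M[R]_(m, n)) : Prop :=
  [/\ A = U - V,
      (forall y, in_range U y <-> in_range A y) &
      (forall x, in_null U x <-> in_null A x)].

(* spectral radius: max modulus of the (complex) eigenvalues, i.e. of the
   roots in R[i] of the characteristic polynomial (0 for the empty matrix). *)
Definition spectral_radius (R : rcfType) (n : nat) (M : 'M[R]_n) : R :=
  let p := char_poly (map_mx (real_complex R) M) in
  \big[Num.max/0]_(z <- sval (closed_field_poly_normal p)) Normc.normc z.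

(* convergent splitting: rho(U^+ V) < 1, where Ud is the MP inverse of U *)
Definition convergent_splitting (R : rcfType) (m n : nat)
    (U V : 'M[R]_(m, n)) (Ud : 'M[R]_(n, m)) : Prop :=
  spectral_radius (Ud *m V) < 1.

Definition pns_type_I (R : rcfType) (m n : nat) (A U V : 'M[R]_(m, n)) (Ud : 'M[R]_(n, m)) : Prop :=
  proper_splitting A U V /\ mx_le 0 (Ud *m V).
Definition pns_type_II (R : rcfType) (m n : nat) (A U V : 'M[R]_(m, n)) (Ud : 'M[R]_(n, m)) : Prop :=
  proper_splitting A U V /\ mx_le 0 (V *m Ud).

From mathcomp Require Import all_boot all_order all_algebra.
From mathcomp Require Import closed_field complex polyrcf.
Import Order.TTheory GRing.Theory Num.Theory.
Local Open Scope ring_scope.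
Set Implicit Arguments. Unset Strict Implicit. Unset Printing Implicit Defensive.

(* In the type I / type II case put T := U1^+ V1 >= 0,
   S := V2 U2^+ >= 0 and X := A^+ >= 0 (the other case is the transposed one).
   The splitting identities U1^+ V1 A^+ = A^+ - U1^+ and A^+ V2 U2^+ = A^+ - U2^+
   give U1^+ - U2^+ = X S - T X > 0.  If S w = r w with w >= 0 a Perron vector,
   then x := X w is positive and T x = r x - (U1^+ - U2^+) w < r x, so every
   eigenvalue of T has modulus < r <= rho(S) = rho(U2^+ V2).
   Over a real closed field the Perron vector of M >= 0 is built algebraically:
   the t with (t - M)^-1 >= 0 form an open up-closed half-line whose end point
   tau is among the roots of finitely many polynomials, and removing from
   adj(X - M) 1 its common factor (X - tau)^j and evaluating at tau yields a
   nonnegative eigenvector for tau. *)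

Lemma mx_lt_scale (R : rcfType) m n (Y X : 'M[R]_(m, n)) :
  mx_lt Y X -> exists a : R, [/\ 0 < a, a < 1 & mx_le Y (a *: X)].
Proof.
move=> YX.
pose a := \big[Num.max/2^-1]_(ij | 0 < X ij.1 ij.2) (Y ij.1 ij.2 / X ij.1 ij.2).
have half_le_a : 2^-1 <= a by exact: bigmax_ge_id.
have a_lt1 : a < 1.
  apply: bigmax_lt => [|ij Xij]; first by rewrite invf_lt1 ?ltr0n ?ltr1n.
  by rewrite ltr_pdivrMr // mul1r.
exists a; split=> //; first by apply: lt_le_trans half_le_a; rewrite invr_gt0 ltr0n.
move=> i j; rewrite mxE; have [Xij_gt0 | Xij_le0] := ltrP 0 (X i j).
  rewrite -ler_pdivrMr //.
  exact: (@le_bigmax_cond _ _ _ _ (i, j) (fun ij => 0 < X ij.1 ij.2) _ Xij_gt0).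
apply: le_trans (ltW (YX i j)) _.
by rewrite -subr_ge0 -{2}(mul1r (X i j)) -mulrBl mulr_le0 // subr_le0 ltW.
Qed.

Section ProperSplitting.
Variables (R : rcfType) (m n : nat).

Lemma range_factor (B C : 'M[R]_(m, n)) :
  (forall y, in_range B y -> in_range C y) -> exists W : 'M[R]_n, B = C *m W.
Proof.
move=> BC; have /fin_all_exists [w Bw] : forall j : 'I_n,
    exists w : 'cV[R]_n, B *m delta_mx j 0 = C *m w.
  by move=> j; apply: BC; exists (delta_mx j 0).
exists (\matrix_(i, j) w j i 0); apply/matrixP => i j.
have := congr1 (fun v : 'cV[R]_m => v i 0) (Bw j).
rewrite -colE [in LHS]mxE => ->.
by rewrite !mxE; apply: eq_bigr => l _; rewrite mxE.
Qed.

Lemma null_mulmx0 p (B C : 'M[R]_(m, n)) (Z : 'M[R]_(n, p)) :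
  (forall x, in_null B x -> in_null C x) -> B *m Z = 0 -> C *m Z = 0.
Proof.
move=> BC BZ0; apply/matrixP => i j.
have /matrixP/(_ i 0) : in_null C (Z *m delta_mx j 0).
  by apply: BC; rewrite /in_null mulmxA BZ0 mul0mx.
by rewrite mulmxA -colE !mxE.
Qed.

Variables (A U V : 'M[R]_(m, n)) (Ad Ud : 'M[R]_(n, m)).
Hypothesis hsplit : proper_splitting A U V.
Hypotheses (hAd : is_MP_inverse A Ad) (hUd : is_MP_inverse U Ud).

(* Both sides are the orthogonal projector onto R(A) = R(U). *)
Lemma proper_splitting_mulmx_pinv : A *m Ad = U *m Ud.
Proof.
case: hsplit => _ rangeUA _; case: hAd => AAdA _ AAd_sym _; case: hUd => UUdU _ UUd_sym _.
have [W UW] := range_factor (fun y => proj1 (rangeUA y)).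
have [W' AW'] := range_factor (fun y => proj2 (rangeUA y)).
have PQ : A *m Ad *m (U *m Ud) = U *m Ud by rewrite mulmxA UW !mulmxA AAdA.
have QP : U *m Ud *m (A *m Ad) = A *m Ad by rewrite mulmxA {1}AW' !mulmxA UUdU -AW'.
by rewrite -AAd_sym -QP trmx_mul AAd_sym UUd_sym PQ.
Qed.

(* Both sides are the orthogonal projector onto the complement of N(A) = N(U). *)
Lemma proper_splitting_pinv_mulmx : Ad *m A = Ud *m U.
Proof.
case: hsplit => _ _ nullUA; case: hAd => AAdA _ _ AdA_sym; case: hUd => UUdU _ _ UdU_sym.
have AUdU : A *m (Ud *m U) = A.
  apply/eqP; rewrite -subr_eq0 -[X in _ - X]mulmx1 -mulmxBr; apply/eqP.
  apply: (null_mulmx0 (fun x => proj1 (nullUA x))).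
  by rewrite mulmxBr mulmx1 mulmxA UUdU subrr.
have UAdA : U *m (Ad *m A) = U.
  apply/eqP; rewrite -subr_eq0 -[X in _ - X]mulmx1 -mulmxBr; apply/eqP.
  apply: (null_mulmx0 (fun x => proj2 (nullUA x))).
  by rewrite mulmxBr mulmx1 mulmxA AAdA subrr.
have PQ : Ad *m A *m (Ud *m U) = Ad *m A by rewrite -mulmxA AUdU.
have QP : Ud *m U *m (Ad *m A) = Ud *m U by rewrite -mulmxA UAdA.
by rewrite -AdA_sym -PQ trmx_mul AdA_sym UdU_sym QP.
Qed.

Lemma proper_splitting_VE : V = U - A.
Proof. by case: hsplit => -> _ _; rewrite opprB addrC subrK. Qed.

Lemma pinv_mulmx_splitting : Ud *m V *m Ad = Ad - Ud.
Proof.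
case: hAd => _ AdAAd _ _; case: hUd => _ UdUUd _ _.
rewrite proper_splitting_VE mulmxBr mulmxBl -proper_splitting_pinv_mulmx AdAAd.
by rewrite -mulmxA proper_splitting_mulmx_pinv mulmxA UdUUd.
Qed.

Lemma mulmx_splitting_pinv : Ad *m V *m Ud = Ad - Ud.
Proof.
case: hAd => _ AdAAd _ _; case: hUd => _ UdUUd _ _.
rewrite proper_splitting_VE mulmxBr mulmxBl -mulmxA -proper_splitting_mulmx_pinv mulmxA AdAAd.
by rewrite proper_splitting_pinv_mulmx UdUUd.
Qed.

End ProperSplitting.

Lemma pinv_sub_splittings (R : rcfType) m n (A U1 V1 U2 V2 : 'M[R]_(m, n))
    (Ad U1d U2d : 'M[R]_(n, m)) :
  is_MP_inverse A Ad -> is_MP_inverse U1 U1d -> is_MP_inverse U2 U2d ->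
  proper_splitting A U1 V1 -> proper_splitting A U2 V2 ->
  U1d - U2d = Ad *m (V2 *m U2d) - U1d *m V1 *m Ad.
Proof.
move=> hAd hU1d hU2d split1 split2.
rewrite mulmxA (mulmx_splitting_pinv split2 hAd hU2d).
by rewrite (pinv_mulmx_splitting split1 hAd hU1d) opprB [RHS]addrC addrA subrK.
Qed.

Lemma ex_argmin (R : realDomainType) (I : finType) (i : I) (F : I -> R) :
  exists i0, forall j, F i0 <= F j.
Proof. by case: (@arg_minP _ R I i predT F isT) => j _ H; exists j => k; apply: H. Qed.

Lemma ex_argmax (R : realDomainType) (I : finType) (i : I) (F : I -> R) :
  exists i0, forall j, F j <= F i0.
Proof. by case: (@arg_maxP _ R I i predT F isT) => j _ H; exists j => k; apply: H. Qed.

Lemma nonzero_col (R : nzRingType) n (v : 'cV[R]_n) : v != 0 -> exists i, v i 0 != 0.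
Proof.
move=> vnz; apply/existsP; apply: contraNT vnz => /existsPn v0.
by apply/eqP/matrixP => i j; rewrite (ord1 j) mxE; apply/eqP; rewrite -[_ == _]negbK.
Qed.

Lemma mulmx_col_ge0 (R : numDomainType) p q (M : 'M[R]_(p, q)) (x : 'cV[R]_q) :
  (forall i j, 0 <= M i j) -> (forall j, 0 <= x j 0) -> forall i, 0 <= (M *m x) i 0.
Proof. by move=> M_ge0 x_ge0 i; rewrite mxE; apply: sumr_ge0 => j _; apply: mulr_ge0. Qed.

Definition subinvariant (R : numDomainType) k (M : 'M[R]_k) (t : R) : Prop :=
  exists2 x : 'cV[R]_k, forall i, 0 < x i 0 & forall i, (M *m x) i 0 < t * x i 0.

Section ZMatrix.
Variables (R : realFieldType) (k : nat) (B : 'M[R]_k) (x : 'cV[R]_k).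
Hypothesis B_offdiag : forall i j, i != j -> B i j <= 0.
Hypotheses (x_gt0 : forall i, 0 < x i 0) (Bx_gt0 : forall i, 0 < (B *m x) i 0).

(* If column j of V had a negative entry, let c < 0 be the largest scalar with
   c x <= V_j, attained at row i0; then (B (V_j - c x))_i0 is <= 0 by the sign
   pattern of B, but it is (B V)_(i0, j) - c (B x)_i0 > 0. *)
Lemma Zmatrix_monotone l (V : 'M[R]_(k, l)) :
  (forall i j, 0 <= (B *m V) i j) -> forall i j, 0 <= V i j.
Proof.
move=> BV_ge0 i j; rewrite leNgt; apply/negP => Vij_lt0.
have [i0 min_i0] := ex_argmin i (fun i => V i j / x i 0).
set c := V i0 j / x i0 0 in min_i0.
have c_lt0 : c < 0 by apply: le_lt_trans (min_i0 i) _; rewrite pmulr_llt0 ?invr_gt0.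
have E : (B *m V) i0 j - c * (B *m x) i0 0 = \sum_i1 B i0 i1 * (V i1 j - c * x i1 0).
  by rewrite !mxE mulr_sumr -sumrB; apply: eq_bigr => i1 _; rewrite mulrBr mulrCA.
have : 0 < (B *m V) i0 j - c * (B *m x) i0 0.
  by rewrite -mulNr ltr_wpDl // mulr_gt0 ?oppr_gt0.
rewrite E ltNge => /negP; apply; apply: sumr_le0 => i1 _.
have [->|ne] := eqVneq i1 i0; first by rewrite /c mulfVK ?subrr ?mulr0 // gt_eqF.
by rewrite mulr_le0_ge0 ?B_offdiag 1?eq_sym // subr_ge0 -ler_pdivlMr.
Qed.

Lemma Zmatrix_unitmx : B \in unitmx.
Proof.
rewrite unitmxE unitfE -det_tr; apply/negP => /det0P [v vnz vB0].
have BvT0 : B *m v^T = 0 by rewrite -[LHS]trmxK trmx_mul trmxK vB0 trmx0.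
have v_ge0 := Zmatrix_monotone (V := v^T).
have v_le0 := Zmatrix_monotone (V := - v^T).
move/eqP: vnz; apply; apply/matrixP => i j; apply/eqP.
rewrite mulmxN BvT0 oppr0 in v_le0; rewrite BvT0 in v_ge0.
have zero_ge0 l : forall i j, 0 <= (0 : 'M[R]_(k, l)) i j by move=> *; rewrite mxE.
have := v_ge0 (zero_ge0 _) j i; have := v_le0 (zero_ge0 _) j i.
by rewrite !mxE oppr_ge0 => v_le v_ge; rewrite eq_le v_le v_ge.
Qed.

Lemma Zmatrix_invmx_ge0 i j : 0 <= invmx B i j.
Proof. by apply: Zmatrix_monotone => i1 j1; rewrite mulmxV ?Zmatrix_unitmx // mxE ler0n. Qed.

End ZMatrix.

Section Resolvent.
Variables (R : realFieldType) (k : nat) (M : 'M[R]_k).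
Hypothesis M_ge0 : forall i j, 0 <= M i j.

Definition resolvent_ge0 (t : R) : bool :=
  (t%:M - M \in unitmx) && [forall i, forall j, 0 <= invmx (t%:M - M) i j].

Definition shift_bound : R := 1 + \sum_i \sum_j M i j.

Lemma shift_offdiag t i j : i != j -> (t%:M - M) i j <= 0.
Proof. by move=> ij; rewrite !mxE (negPf ij) mulr0n sub0r oppr_le0. Qed.

Lemma shift_mulmxE t (x : 'cV[R]_k) i : ((t%:M - M) *m x) i 0 = t * x i 0 - (M *m x) i 0.
Proof. by rewrite mulmxBl mul_scalar_mx !mxE. Qed.

(* A subinvariant vector is (t - M)^-1 1; conversely, t - M is then a Z-matrix
   mapping a positive vector to a positive one. *)
Lemma resolvent_ge0P t : reflect (subinvariant M t) (resolvent_ge0 t).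
Proof.
apply: (iffP idP) => [/andP[unit_t /forallP inv_ge0] | [x x_gt0 Mx_lt]].
  pose x : 'cV[R]_k := invmx (t%:M - M) *m const_mx 1.
  have x_ge0 i : 0 <= x i 0.
    rewrite mxE; apply: sumr_ge0 => j _; rewrite mxE mulr1.
    exact: (forallP (inv_ge0 i) j).
  have tx i : t * x i 0 = 1 + (M *m x) i 0.
    have := shift_mulmxE t x i; rewrite mulmxA mulmxV // mul1mx mxE => /eqP.
    by rewrite eq_sym subr_eq addrC => /eqP.
  have tx_gt0 i : 0 < t * x i 0.
    by rewrite tx; apply: lt_le_trans ltr01 _; rewrite lerDl mulmx_col_ge0.
  exists x => i; last by rewrite tx ltrDr.
  by rewrite lt_def x_ge0 andbT; apply: contraTneq (tx_gt0 i) => ->; rewrite mulr0 ltxx.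
have Bx_gt0 i : 0 < ((t%:M - M) *m x) i 0 by rewrite shift_mulmxE subr_gt0.
rewrite /resolvent_ge0 (Zmatrix_unitmx (@shift_offdiag t) x_gt0 Bx_gt0).
by apply/forallP => i; apply/forallP => j; apply: (Zmatrix_invmx_ge0 (@shift_offdiag t) x_gt0 Bx_gt0).
Qed.

Lemma resolvent_ge0_gt0 (i0 : 'I_k) t : resolvent_ge0 t -> 0 < t.
Proof.
case/resolvent_ge0P => x x_gt0 Mx_lt.
have := le_lt_trans (mulmx_col_ge0 M_ge0 (fun j => ltW (x_gt0 j)) i0) (Mx_lt i0).
by rewrite pmulr_lgt0.
Qed.

Lemma resolvent_ge0_ge t s : resolvent_ge0 t -> t <= s -> resolvent_ge0 s.
Proof.
case/resolvent_ge0P => x x_gt0 Mx_lt ts; apply/resolvent_ge0P; exists x => // i.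
by apply: lt_le_trans (Mx_lt i) _; rewrite ler_pM2r.
Qed.

Lemma resolvent_ge0_open (i0 : 'I_k) t :
  resolvent_ge0 t -> exists2 e, 0 < e & resolvent_ge0 (t - e).
Proof.
case/resolvent_ge0P => x x_gt0 Mx_lt.
pose d i := t * x i 0 - (M *m x) i 0.
have d_gt0 i : 0 < d i by rewrite subr_gt0.
have [i1 min_i1] := ex_argmin i0 (fun i => d i / x i 0).
have ratio_gt0 : 0 < d i1 / x i1 0 by rewrite divr_gt0.
exists (d i1 / x i1 0 / 2); first by rewrite divr_gt0.
apply/resolvent_ge0P; exists x => // i.
rewrite mulrBl ltrBrDl -ltrBrDr -/(d i) -ltr_pdivlMr //.
by rewrite (lt_le_trans _ (min_i1 i)) // ltr_pdivrMr // ltr_pMr // ltr1n.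
Qed.

Lemma resolvent_ge0_bound : resolvent_ge0 shift_bound.
Proof.
apply/resolvent_ge0P; exists (const_mx 1) => i; first by rewrite mxE ltr01.
rewrite [X in _ < _ * X]mxE mulr1 /shift_bound ltr_pwDl //.
apply: (@le_trans _ _ (\sum_j M i j)).
  by rewrite mxE; apply: ler_sum => j _; rewrite mxE mulr1.
by rewrite [leRHS](bigD1 i) //= lerDl sumr_ge0 // => i1 _; apply: sumr_ge0.
Qed.

End Resolvent.

Lemma horner_ge0_right (R : rcfType) (p : {poly R}) a :
  (forall t, a < t -> 0 <= p.[t]) -> 0 <= p.[a].
Proof.
move=> p_ge0; rewrite leNgt; apply/negP; rewrite -oppr_gt0.
move=> /(poly_cont a p) [d d_gt0 near_a].
have d2_gt0 : 0 < d / 2 by rewrite divr_gt0.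
have := near_a (a + d / 2); rewrite addrAC subrr add0r gtr0_norm //.
rewrite ltr_pdivrMr // ltr_pMr // ltr1n ltr_norml => /(_ isT) /andP[_].
by rewrite ltrBlDr addNr ltNge p_ge0 // ltrDl.
Qed.

Lemma col_XsubC_factor (R : fieldType) n (a : R) (Y : 'cV[{poly R}]_n) : Y != 0 ->
  exists j, exists2 Z : 'cV[{poly R}]_n, Y = ('X - a%:P) ^+ j *: Z &
    exists i, ~~ root (Z i 0) a.
Proof.
move: {2}(\sum_i size (Y i 0%R))%N (leqnn (\sum_i size (Y i 0%R))) => N.
elim: N Y => [|N IH] Y sizeY Y_neq0.
  case/negP: Y_neq0; apply/eqP/matrixP => i j; rewrite mxE (ord1 j).
  apply/eqP; rewrite -size_poly_eq0 -leqn0; apply: leq_trans sizeY.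
  by rewrite (bigD1 i) //= leq_addr.
have [/existsP [i Yi] | /existsPn all_root] := boolP [exists i, ~~ root (Y i 0) a].
  by exists 0%N; exists Y; [rewrite expr0 scale1r | exists i].
pose Y' := map_mx (fun p => p %/ ('X - a%:P)) Y.
have YE : Y = ('X - a%:P) *: Y'.
  apply/matrixP => i j; rewrite !mxE (ord1 j) mulrC divpK // dvdp_XsubCl.
  by rewrite -[root _ _]negbK all_root.
have Y'_neq0 : Y' != 0 by apply: contraNneq Y_neq0 => Y'0; rewrite YE Y'0 scaler0.
have [i1 Yi1] := nonzero_col Y_neq0.
have sizeY' i : size (Y' i 0) = (size (Y i 0)).-1.
  by rewrite mxE size_divp ?polyXsubC_eq0 // size_XsubC subn1.
have [|j [Z Y'E Z_root]] := IH Y' _ Y'_neq0.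
  rewrite -ltnS; apply: leq_trans sizeY.
  rewrite (bigD1 i1) //= [X in (_ < X)%N](bigD1 i1) //= -addSn leq_add //.
    by rewrite sizeY' prednK // lt0n size_poly_eq0.
  by apply: leq_sum => i _; rewrite sizeY' leq_pred.
by exists j.+1; exists Z => //; rewrite YE Y'E scalerA -exprS.
Qed.

Local Notation noroot p := (forall x, ~~ root p x).

Section Perron.
Variables (R : rcfType) (k : nat) (M : 'M[R]_k).
Hypothesis M_ge0 : forall i j, 0 <= M i j.
Variable i0 : 'I_k.

Local Notation P := (char_poly M).
Local Notation Aj := (\adj (char_poly_mx M)).

Lemma horner_char_poly_mx t : map_mx (horner_eval t) (char_poly_mx M) = t%:M - M.
Proof.
apply/matrixP => i j; rewrite !mxE /= horner_evalE.
by rewrite hornerD hornerN hornerMn hornerX hornerC.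
Qed.

Lemma horner_char_poly t : P.[t] = \det (t%:M - M).
Proof. by rewrite -horner_char_poly_mx det_map_mx. Qed.

Lemma horner_adj_char_poly_mx t i j : (Aj i j).[t] = \adj (t%:M - M) i j.
Proof. by rewrite -horner_char_poly_mx -map_mx_adj [RHS]mxE. Qed.

(* Up to the positive factor P(t)^2, the entries of (t - M)^-1 are the values of
   the polynomials adj(X - M)_ij * P. *)
Lemma resolvent_ge0E t : resolvent_ge0 M t =
  (P.[t] != 0) && [forall i, forall j, 0 <= (Aj i j * P).[t]].
Proof.
rewrite /resolvent_ge0 unitmxE unitfE -horner_char_poly.
have [//|Pt_neq0] := eqVneq P.[t] 0.
apply: eq_forallb => i; apply: eq_forallb => j.
rewrite /invmx unitmxE unitfE -horner_char_poly Pt_neq0 mxE hornerM.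
rewrite horner_adj_char_poly_mx; set a := \adj _ i j.
have -> : P.[t]^-1 * a = a * P.[t] * P.[t]^-1 ^+ 2 by rewrite expr2 mulrA mulfK // mulrC.
by rewrite pmulr_lge0 // exprn_even_gt0 //= invr_eq0.
Qed.

Definition threshold_poly : {poly R} :=
  P * \prod_(ij : 'I_k * 'I_k | Aj ij.1 ij.2 != 0) Aj ij.1 ij.2.

Lemma threshold_poly_neq0 : threshold_poly != 0.
Proof.
by rewrite mulf_neq0 ?(monic_neq0 (char_poly_monic M)) //; apply/prodf_neq0.
Qed.

Lemma root_threshold_poly t i j :
  root (Aj i j * P) t -> Aj i j != 0 -> root threshold_poly t.
Proof.
rewrite rootM /threshold_poly rootM orbC => /orP[-> //|Aij_t Aij_neq0].
by rewrite (bigD1 (i, j)) //= rootM Aij_t orbT.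
Qed.

(* The sign pattern of the resolvent can only change at roots of
   [threshold_poly], so the threshold beyond which (t - M)^-1 >= 0 is the
   largest of them at which this fails (see [resolvent_ge0_gt_perron_root]). *)
Definition perron_root : R :=
  \big[Num.max/0]_(x <- roots threshold_poly 0 (shift_bound M) | ~~ resolvent_ge0 M x) x.

Lemma perron_root_spec : 0 <= perron_root /\ ~~ resolvent_ge0 M perron_root.
Proof.
suff: (0 <= perron_root) && ~~ resolvent_ge0 M perron_root by case/andP.
rewrite /perron_root big_seq_cond.
apply: (big_ind (fun x => (0 <= x) && ~~ resolvent_ge0 M x)).
- by rewrite lexx /=; apply: contraTN isT => /(resolvent_ge0_gt0 M_ge0 i0); rewrite ltxx.
- by move=> x y Kx Ky; rewrite /Num.max; case: ifP.
- move=> x /andP[x_root ->]; rewrite andbT.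
  by move: x_root; rewrite in_roots => /and3P[_ /itvP -> _].
Qed.

Lemma le_perron_root t : 0 < t -> t < shift_bound M -> root threshold_poly t ->
  ~~ resolvent_ge0 M t -> t <= perron_root.
Proof.
move=> t_gt0 t_lt t_root t_not.
apply: (le_bigmax_seq _ _ (fun x => ~~ resolvent_ge0 M x) id _ t_not).
by rewrite in_roots threshold_poly_neq0 t_root in_itv /= t_gt0 t_lt.
Qed.

(* If y had the property, then by openness and monotonicity so would some s in
   ]t, y[, where q(s) < 0. *)
Lemma not_resolvent_ge0_first_root (q : {poly R}) t y : t < y -> q.[t] < 0 ->
  {in `]t, y[, noroot q} -> (forall s, resolvent_ge0 M s -> 0 <= q.[s]) ->
  ~~ resolvent_ge0 M y.
Proof.
move=> t_lt_y qt_lt0 q_noroot q_ge0; apply/negP => y_res.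
have [e e_gt0 ye_res] := resolvent_ge0_open M_ge0 i0 y_res.
pose s := Num.max (y - e) ((t + y) / 2).
have s_res : resolvent_ge0 M s by apply: (resolvent_ge0_ge M_ge0 ye_res); rewrite le_max lexx.
have t_lt_s : t < s by rewrite lt_max ltr_pdivlMr // mulrDr mulr1 ltrD2l t_lt_y orbT.
have s_lt_y : s < y.
  by rewrite gt_max ltrBlDr ltrDl e_gt0 /= ltr_pdivrMr // mulrDr mulr1 ltrD2r.
have q_noroot_ts : {in `[t, s], noroot q}.
  move=> z; rewrite in_itv /= => /andP[tz zs].
  have [->|zt] := eqVneq z t; first by rewrite rootE lt_eqF.
  by apply: q_noroot; rewrite in_itv /= (le_lt_trans zs s_lt_y) andbT lt_def zt.
have sgr_ts : Num.sg q.[t] = Num.sg q.[s].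
  by apply: (polyrN0_itv q_noroot_ts); rewrite in_itv /= ?lexx ?(ltW t_lt_s).
by have := q_ge0 s s_res; rewrite -sgr_ge0 -sgr_ts sgr_ge0 leNgt qt_lt0.
Qed.

Lemma not_resolvent_ge0_root_above t : 0 < t -> ~~ resolvent_ge0 M t ->
  exists y, [/\ t <= y, y < shift_bound M, root threshold_poly y & ~~ resolvent_ge0 M y].
Proof.
move=> t_gt0 t_not.
have t_lt : t < shift_bound M.
  by rewrite ltNge; apply: contra t_not; apply: (resolvent_ge0_ge M_ge0 (resolvent_ge0_bound M_ge0)).
have [Pt0|Pt_neq0] := eqVneq P.[t] 0.
  by exists t; split=> //; rewrite /threshold_poly rootM rootE Pt0 eqxx.
move: t_not; rewrite resolvent_ge0E Pt_neq0 /= => /forallPn [i /forallPn [j]].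
rewrite -ltNge; set q := Aj i j * P => qt_lt0.
have Aij_neq0 : Aj i j != 0.
  by apply: contraTneq qt_lt0 => Aij0; rewrite /q Aij0 mul0r horner0 ltxx.
have q_ge0 s : resolvent_ge0 M s -> 0 <= q.[s].
  by rewrite resolvent_ge0E => /andP[_ /forallP /(_ i) /forallP /(_ j)].
case: (next_rootP q t (shift_bound M)) => [q0|y _ /eqP y_root y_in q_noroot|_ _ _ q_noroot].
- by move: qt_lt0; rewrite q0 horner0 ltxx.
- have [t_lt_y y_lt] : t < y /\ y < shift_bound M by rewrite !(itvP y_in).
  exists y; split; [exact: ltW | done | exact: root_threshold_poly y_root Aij_neq0 |].
  exact: not_resolvent_ge0_first_root t_lt_y qt_lt0 q_noroot q_ge0.
- have := not_resolvent_ge0_first_root t_lt qt_lt0 q_noroot q_ge0.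
  by rewrite resolvent_ge0_bound.
Qed.

Lemma resolvent_ge0_gt_perron_root t : perron_root < t -> resolvent_ge0 M t.
Proof.
move=> lt_t; apply/contraT => t_not; have [root_ge0 _] := perron_root_spec.
have [y [t_le_y y_lt y_root y_not]] :=
  not_resolvent_ge0_root_above (le_lt_trans root_ge0 lt_t) t_not.
have := le_perron_root (lt_le_trans (le_lt_trans root_ge0 lt_t) t_le_y) y_lt y_root y_not.
by rewrite leNgt (lt_le_trans lt_t t_le_y).
Qed.

Lemma char_poly_gt0 t : perron_root < t -> 0 < P.[t].
Proof.
move=> lt_t.
have P_neq0 s : perron_root < s -> P.[s] != 0.
  by move/resolvent_ge0_gt_perron_root; rewrite resolvent_ge0E => /andP[].
have lcP : lead_coef P = 1 := monicP (char_poly_monic M).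
have [n P_large] : exists n, forall x, n <= x -> lead_coef P <= P.[x].
  by apply: poly_pinfty_gt_lc; rewrite lcP ltr01.
pose u := Num.max n t.
have P_noroot : {in `[t, u], noroot P}.
  move=> x; rewrite in_itv /= rootE => /andP[tx _].
  exact: P_neq0 (lt_le_trans lt_t tx).
have sgr_tu : Num.sg P.[t] = Num.sg P.[u].
  by apply: (polyrN0_itv P_noroot); rewrite in_itv /= lexx ?le_max lexx ?orbT.
have Pu_gt0 : 0 < P.[u] by rewrite (lt_le_trans ltr01) // -lcP P_large // le_max lexx.
by rewrite -sgr_gt0 sgr_tu sgr_gt0.
Qed.

Lemma horner_adj_ge0 t i j : perron_root < t -> 0 <= (Aj i j).[t].
Proof.
move=> lt_t; have /resolvent_ge0_gt_perron_root := lt_t; rewrite resolvent_ge0E.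
case/andP=> _ /forallP/(_ i)/forallP/(_ j); rewrite hornerM pmulr_lge0 //.
exact: char_poly_gt0.
Qed.

Lemma char_poly_cofactor_gt0 mu (Q : {poly R}) :
  ~~ root Q perron_root -> P = Q * ('X - perron_root%:P) ^+ mu -> 0 < Q.[perron_root].
Proof.
move=> Q_noroot PE; rewrite lt_def -rootE Q_noroot /=.
apply: horner_ge0_right => t lt_t; apply: ltW.
move: (char_poly_gt0 lt_t); rewrite PE hornerM horner_exp hornerXsubC.
by rewrite pmulr_lgt0 // exprn_gt0 // subr_gt0.
Qed.

(* Z is adj(X - M) 1 with its common factor (X - perron_root)^j removed; it is
   >= 0 beyond [perron_root], hence at [perron_root]. *)
Lemma perron_vector_factor : exists j, exists Z : 'cV[{poly R}]_k,
  [/\ ('X - perron_root%:P) ^+ j *: (char_poly_mx M *m Z) = P *: const_mx 1,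
      forall i, 0 <= (Z i 0).[perron_root] & exists i, ~~ root (Z i 0) perron_root].
Proof.
pose Y := Aj *m (const_mx 1 : 'cV[{poly R}]_k).
have MY : char_poly_mx M *m Y = P *: const_mx 1.
  by rewrite /Y mulmxA mul_mx_adj mul_scalar_mx.
have Y_neq0 : Y != 0.
  apply: contraTneq (monic_neq0 (char_poly_monic M)) => Y0; rewrite negbK.
  by move/matrixP: MY => /(_ i0 0); rewrite Y0 mulmx0 !mxE mulr1 => /esym/eqP.
have [j [Z YE Z_noroot]] := col_XsubC_factor perron_root Y_neq0.
exists j, Z; split=> //; first by rewrite scalemxAr -YE.
move=> i; apply: horner_ge0_right => t lt_t.
have : 0 <= (Y i 0).[t].
  rewrite mxE horner_sum; apply: sumr_ge0 => l _.
  by rewrite [const_mx 1 _ _]mxE mulr1 horner_adj_ge0.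
by rewrite YE mxE hornerM horner_exp hornerXsubC pmulr_rge0 // exprn_gt0 // subr_gt0.
Qed.

Lemma shift_perron_root_not_gt0 (z : 'cV[R]_k) : (forall i, 0 <= z i 0) ->
  ~ (forall i, 0 < ((perron_root%:M - M) *m z) i 0).
Proof.
move=> z_ge0 shift_z_gt0.
have Mz_lt i : (M *m z) i 0 < perron_root * z i 0.
  by rewrite -subr_gt0 -shift_mulmxE shift_z_gt0.
have z_gt0 i : 0 < z i 0.
  rewrite lt_def z_ge0 andbT.
  apply: contraTneq (le_lt_trans (mulmx_col_ge0 M_ge0 z_ge0 i) (Mz_lt i)).
  by move=> ->; rewrite mulr0 ltxx.
have [_ /negP[]] := perron_root_spec.
by apply/resolvent_ge0P => //; exists z.
Qed.

(* Compare the multiplicity j of [perron_root] extracted from adj(X - M) 1 with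
   its multiplicity mu in P: if j < mu the evaluated vector is an eigenvector,
   otherwise j = mu and (perron_root - M) z = Q(perron_root) 1 > 0. *)
Theorem perron_eigenvector : exists r, exists z : 'cV[R]_k,
  [/\ forall i, 0 <= z i 0, z != 0 & M *m z = r *: z].
Proof.
set T := perron_root.
have [j [Z [MZ Z_ge0 [i1 Z_i1]]]] := perron_vector_factor.
pose z := map_mx (horner_eval T) Z.
have z_ge0 i : 0 <= z i 0 by rewrite mxE; exact: Z_ge0.
have z_neq0 : z != 0.
  by apply: contraNneq Z_i1 => /matrixP/(_ i1 0); rewrite !mxE horner_evalE rootE => ->.
have [mu [Q Q_noroot PE]] := multiplicity_XsubC P T.
rewrite (monic_neq0 (char_poly_monic M)) /= in Q_noroot.
pose W := char_poly_mx M *m Z.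
have WE i : ('X - T%:P) ^+ j * W i 0 = Q * ('X - T%:P) ^+ mu.
  by move/matrixP: MZ => /(_ i 0); rewrite !mxE mulr1 -PE.
have shift_z i : ((T%:M - M) *m z) i 0 = (W i 0).[T].
  by rewrite -horner_char_poly_mx -map_mxM mxE.
have XT_neq0 l : ('X - T%:P) ^+ l != 0 by rewrite expf_neq0 // polyXsubC_eq0.
have [j_lt_mu|mu_le_j] := ltnP j mu.
  have /eqP : (T%:M - M) *m z = 0.
    apply/matrixP => i l; rewrite (ord1 l) shift_z [RHS]mxE.
    have := WE i; rewrite -(subnKC (ltnW j_lt_mu)) exprD mulrCA.
    move=> /(mulfI (XT_neq0 j)) ->; rewrite hornerM horner_exp hornerXsubC subrr.
    by rewrite expr0n subn_eq0 leqNgt j_lt_mu mulr0.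
  by rewrite mulmxBl mul_scalar_mx subr_eq0 => /eqP Mz; exists T, z.
have {}WE i : ('X - T%:P) ^+ (j - mu) * W i 0 = Q.
  by apply: (mulIf (XT_neq0 mu)); rewrite mulrAC -exprD subnK.
have j_eq_mu : j = mu.
  apply/eqP; rewrite eqn_leq mu_le_j andbT -subn_eq0; apply: contraNT Q_noroot => jmu.
  by rewrite -(WE i0) rootE hornerM horner_exp hornerXsubC subrr expr0n (negPf jmu) mul0r.
exfalso; apply: (shift_perron_root_not_gt0 z_ge0) => i.
rewrite shift_z; have := WE i; rewrite j_eq_mu subnn expr0 mul1r => ->.
exact: char_poly_cofactor_gt0 Q_noroot PE.
Qed.

End Perron.

Lemma char_poly_trmx (R : comNzRingType) n (A : 'M[R]_n) : char_poly A^T = char_poly A.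
Proof.
rewrite /char_poly -det_tr; congr (\det _); apply/matrixP => i j.
by rewrite !mxE eq_sym.
Qed.

Lemma root_char_polyP (F : fieldType) n (A : 'M[F]_n) z :
  reflect (exists2 v : 'cV[F]_n, v != 0 & A *m v = z *: v) (root (char_poly A) z).
Proof.
rewrite -char_poly_trmx -eigenvalue_root_char; apply: (iffP eigenvalueP).
  case=> v vA vnz; exists v^T; first by rewrite trmx_eq0.
  by rewrite -[A]trmxK -trmx_mul vA linearZ.
case=> v vnz Av; exists v^T; last by rewrite trmx_eq0.
by rewrite -trmx_mul Av linearZ.
Qed.

Section SpectralRadius.
Variable R : rcfType.
Local Notation rc := (real_complex R).
Local Notation normc := (@Normc.normc R).
Local Open Scope complex_scope.

Lemma normc_real (r : R) : normc r%:C = `|r|.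
Proof. by rewrite /Normc.normc /= expr0n /= addr0 sqrtr_sqr. Qed.

Lemma normc_ge0 (z : R[i]) : 0 <= normc z.
Proof. by case: z => a b; rewrite /Normc.normc sqrtr_ge0. Qed.

Lemma normc_sum (I : Type) (r : seq I) (F : I -> R[i]) :
  normc (\sum_(i <- r) F i) <= \sum_(i <- r) normc (F i).
Proof.
elim: r => [|a r IH]; first by rewrite !big_nil Normc.normc0.
by rewrite !big_cons (le_trans (le_normcD _ _)) // lerD2l.
Qed.

Lemma mem_spectrum n (M : 'M[R]_n) z :
  (z \in sval (closed_field_poly_normal (char_poly (map_mx rc M))))
  = root (char_poly (map_mx rc M)) z.
Proof.
case: closed_field_poly_normal => rs /= ->.
by rewrite (monicP (char_poly_monic _)) scale1r root_prod_XsubC.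
Qed.

Lemma normc_le_spectral_radius n (M : 'M[R]_n) z :
  root (char_poly (map_mx rc M)) z -> normc z <= spectral_radius M.
Proof. by rewrite -mem_spectrum => zM; apply: le_bigmax_seq zM _. Qed.

Lemma spectral_radius_ge0 n (M : 'M[R]_n) : 0 <= spectral_radius M.
Proof. exact: bigmax_ge_id. Qed.

Lemma spectral_radius_le n (M : 'M[R]_n) s : 0 <= s ->
  (forall z, root (char_poly (map_mx rc M)) z -> normc z <= s) -> spectral_radius M <= s.
Proof.
move=> s_ge0 Ms; rewrite /spectral_radius /= big_seq.
by apply: bigmax_le => // z; rewrite mem_spectrum; apply: Ms.
Qed.

Lemma spectral_radius_lt n (M : 'M[R]_n) s : 0 < s ->
  (forall z, root (char_poly (map_mx rc M)) z -> normc z < s) -> spectral_radius M < s.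
Proof.
move=> s_gt0 Ms; rewrite /spectral_radius /= big_seq.
by apply: bigmax_lt => // z; rewrite mem_spectrum; apply: Ms.
Qed.

Lemma spectral_radius_trmx n (M : 'M[R]_n) : spectral_radius M^T = spectral_radius M.
Proof. by rewrite /spectral_radius -map_trmx char_poly_trmx. Qed.

Lemma root_char_poly_mulmxC p q (X : 'M[R]_(p, q)) (Y : 'M[R]_(q, p)) z : z != 0 ->
  root (char_poly (map_mx rc (X *m Y))) z -> root (char_poly (map_mx rc (Y *m X))) z.
Proof.
move=> z_neq0 /root_char_polyP [v vnz XYv]; apply/root_char_polyP.
exists (map_mx rc Y *m v).
  apply: contraNneq vnz => Yv0.
  have /eqP : z *: v = 0 by rewrite -XYv map_mxM -mulmxA Yv0 mulmx0.
  by rewrite scaler_eq0 (negPf z_neq0).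
by rewrite map_mxM -mulmxA (mulmxA (map_mx rc X)) -map_mxM XYv scalemxAr.
Qed.

Lemma spectral_radius_mulmxC p q (X : 'M[R]_(p, q)) (Y : 'M[R]_(q, p)) :
  spectral_radius (X *m Y) = spectral_radius (Y *m X).
Proof.
suff le p' q' (X' : 'M[R]_(p', q')) Y' : spectral_radius (X' *m Y') <= spectral_radius (Y' *m X').
  by apply/le_anti; rewrite !le.
apply: spectral_radius_le (spectral_radius_ge0 _) _ => z.
have [-> _|z_neq0 /(root_char_poly_mulmxC z_neq0)] := eqVneq z 0.
  by rewrite Normc.normc0 spectral_radius_ge0.
exact: normc_le_spectral_radius.
Qed.

Lemma eigenvalue_le_spectral_radius n (M : 'M[R]_n) (w : 'cV[R]_n) r :
  w != 0 -> M *m w = r *: w -> `|r| <= spectral_radius M.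
Proof.
move=> wnz Mw; rewrite -normc_real; apply: normc_le_spectral_radius.
apply/root_char_polyP; exists (map_mx rc w); first by rewrite map_mx_eq0.
by rewrite -map_mxM Mw map_mxZ.
Qed.

(* Weigh a complex eigenvector v against x: at an index maximizing |v_i| / x_i the
   triangle inequality gives |z| |v_i| <= (T |v|)_i <= c (T x)_i < s |v_i|. *)
Lemma spectral_radius_lt_subinvariant n (T : 'M[R]_n) s :
  (forall i j, 0 <= T i j) -> 0 < s -> subinvariant T s -> spectral_radius T < s.
Proof.
move=> T_ge0 s_gt0 [x x_gt0 Tx_lt]; apply: spectral_radius_lt => // z.
case/root_char_polyP => v vnz Tv.
pose a i := normc (v i 0).
have [i1 vi1] := nonzero_col vnz.
have [i2 max_i2] := ex_argmax i1 (fun i => a i / x i 0).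
set c := a i2 / x i2 0 in max_i2.
have a_i1 : 0 < a i1.
  by rewrite lt_def normc_ge0 andbT; apply: contra vi1 => /eqP/Normc.eq0_normc ->.
have c_gt0 : 0 < c by apply: lt_le_trans (max_i2 i1); rewrite divr_gt0.
have a_i2 : a i2 = c * x i2 0 by rewrite /c mulfVK // gt_eqF.
have a_i2_gt0 : 0 < a i2 by rewrite a_i2 mulr_gt0.
have zv : z * v i2 0 = \sum_j (T i2 j)%:C * v j 0.
  by move/matrixP: Tv => /(_ i2 0); rewrite !mxE => <-; apply: eq_bigr => j _; rewrite mxE.
have h1 : normc z * a i2 <= \sum_j T i2 j * a j.
  rewrite /a -Normc.normcM zv (le_trans (normc_sum _ _)) //.
  by apply: ler_sum => j _; rewrite Normc.normcM normc_real ger0_norm.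
have h2 : \sum_j T i2 j * a j <= c * (T *m x) i2 0.
  rewrite mxE mulr_sumr; apply: ler_sum => j _.
  by rewrite mulrCA ler_wpM2l // -ler_pdivrMr.
have h3 : c * (T *m x) i2 0 < s * a i2 by rewrite a_i2 mulrCA ltr_pM2l.
by rewrite -(ltr_pM2r a_i2_gt0) (le_lt_trans h1 (le_lt_trans h2 h3)).
Qed.

End SpectralRadius.

Section Comparison.
Variable R : rcfType.

Lemma mx_le0_entry m n (M : 'M[R]_(m, n)) : mx_le 0 M -> forall i j, 0 <= M i j.
Proof. by move=> M_ge0 i j; have := M_ge0 i j; rewrite mxE. Qed.

Lemma mx_lt0_entry m n (M : 'M[R]_(m, n)) : mx_lt 0 M -> forall i j, 0 < M i j.
Proof. by move=> M_gt0 i j; have := M_gt0 i j; rewrite mxE. Qed.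

Lemma mx_le0_trmx m n (M : 'M[R]_(m, n)) : mx_le 0 M -> mx_le 0 M^T.
Proof. by move=> M_ge0 i j; have := M_ge0 j i; rewrite !mxE. Qed.

Lemma mx_lt0_trmx m n (M : 'M[R]_(m, n)) : mx_lt 0 M -> mx_lt 0 M^T.
Proof. by move=> M_gt0 i j; have := M_gt0 j i; rewrite !mxE. Qed.

Lemma mulmx_col_gt0 p q (D : 'M[R]_(p, q)) (w : 'cV[R]_q) :
  (forall i j, 0 < D i j) -> (forall j, 0 <= w j 0) -> w != 0 ->
  forall i, 0 < (D *m w) i 0.
Proof.
move=> D_gt0 w_ge0 w_neq0 i; have [j1 wj1] := nonzero_col w_neq0.
rewrite mxE (bigD1 j1) //=; apply: ltr_pwDl; first by rewrite mulr_gt0 // lt_def wj1 w_ge0.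
by apply: sumr_ge0 => j _; rewrite mulr_ge0 ?w_ge0 ?ltW ?D_gt0.
Qed.

Lemma spectral_radius_lt_intertwined p q (T : 'M[R]_p) (S : 'M[R]_q) (X D : 'M[R]_(p, q)) :
  (0 < p)%N -> (0 < q)%N -> mx_le 0 T -> mx_le 0 S -> mx_le 0 X -> mx_lt 0 D ->
  D = X *m S - T *m X -> spectral_radius T < spectral_radius S.
Proof.
move=> p_gt0 q_gt0 /mx_le0_entry T_ge0 /mx_le0_entry S_ge0 /mx_le0_entry X_ge0.
move=> /mx_lt0_entry D_gt0 DE.
have [r [w [w_ge0 w_neq0 Sw]]] := perron_eigenvector S_ge0 (Ordinal q_gt0).
have Dw_gt0 := mulmx_col_gt0 D_gt0 w_ge0 w_neq0.
set x := X *m w.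
have x_ge0 : forall i, 0 <= x i 0 := mulmx_col_ge0 X_ge0 w_ge0.
have TxE : T *m x = r *: x - D *m w.
  by rewrite DE mulmxBl -!mulmxA Sw -scalemxAr -/x opprB addrC subrK.
have rxE i : r * x i 0 = (T *m x) i 0 + (D *m w) i 0 by rewrite TxE !mxE subrK.
have rx_gt0 i : 0 < r * x i 0.
  by rewrite rxE ltr_wpDl ?(mulmx_col_ge0 T_ge0 x_ge0 i).
have r_gt0 : 0 < r.
  have := rx_gt0 (Ordinal p_gt0); rewrite ltNge; apply: contraNlt => r_le0.
  exact: mulr_le0_ge0.
have x_gt0 i : 0 < x i 0 by have := rx_gt0 i; rewrite pmulr_rgt0.
have Tx_lt i : (T *m x) i 0 < r * x i 0 by rewrite rxE ltrDl.
apply: lt_le_trans (spectral_radius_lt_subinvariant T_ge0 r_gt0 _) _; first by exists x.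
exact: le_trans (ler_norm r) (eigenvalue_le_spectral_radius w_neq0 Sw).
Qed.

End Comparison.

Unset Implicit Arguments.
Set Strict Implicit.

Theorem theorem4p9 (R : rcfType) (m n : nat) (Hm : (0 < m)%N) (Hn : (0 < n)%N)
    (A U1 V1 U2 V2 : 'M[R]_(m, n)) (Ad U1d U2d : 'M[R]_(n, m))
    (hAd : is_MP_inverse A Ad) (hU1d : is_MP_inverse U1 U1d) (hU2d : is_MP_inverse U2 U2d)
    (semimono : mx_le 0 Ad)
    (types : (pns_type_I A U1 V1 U1d /\ pns_type_II A U2 V2 U2d) \/
             (pns_type_II A U1 V1 U1d /\ pns_type_I A U2 V2 U2d))
    (conv1 : convergent_splitting U1 V1 U1d) (conv2 : convergent_splitting U2 V2 U2d)
    (hlt : mx_lt U2d U1d) :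
  (exists alpha : R, [/\ 0 < alpha, alpha < 1 & mx_le U2d (alpha *: U1d)]) /\
  spectral_radius (U1d *m V1) < spectral_radius (U2d *m V2) /\
  spectral_radius (U2d *m V2) < 1.
Proof.
split; first exact: mx_lt_scale.
split=> //.
have diff_gt0 : mx_lt 0 (U1d - U2d) by move=> i j; rewrite !mxE subr_gt0.
case: types => [[[split1 T_ge0] [split2 S_ge0]] | [[split1 T_ge0] [split2 S_ge0]]].
- rewrite [X in _ < X]spectral_radius_mulmxC.
  apply: (spectral_radius_lt_intertwined Hn Hm T_ge0 S_ge0 semimono diff_gt0).
  exact: pinv_sub_splittings hAd hU1d hU2d split1 split2.
- rewrite spectral_radius_mulmxC -spectral_radius_trmx -[X in _ < X]spectral_radius_trmx.
  apply: (spectral_radius_lt_intertwined Hm Hn (mx_le0_trmx T_ge0) (mx_le0_trmx S_ge0)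
    (mx_le0_trmx semimono) (mx_lt0_trmx diff_gt0)).
  rewrite -[U1d - U2d]opprB (pinv_sub_splittings hAd hU2d hU1d split2 split1).
  by rewrite opprB -!trmx_mul -linearB.
Qed.
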